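(* If a topological space $X$ admits an $\omega^\omega$-base at a point $x\in X$, then $X$ is $(\omega_1,\omega)_k$-equiconvergent at $x$.
   Context: $X$ has an $\omega^\omega$-base at $x$ if there is a neighborhood base $(U_\alpha)_{\alpha\in\omega^\omega}$ at $x$ with $U_\beta\subseteq U_\alpha$ whenever $\alpha\le\beta$ pointwise in $\omega^\omega$. $X$ is $(\omega_1,\omega)_k$-equiconvergent at $x$ if for every indexed family $\{x_\alpha\}_{\alpha\in\omega_1}$ of sequences in $X^\omega$ converging to $x$ there is a countably infinite $\Lambda\subseteq\omega_1$ such that for every neighborhood $O_x$ of $x$ there is $n\in\omega$ with $x_\alpha(m)\in O_x$ for all $m\ge n$ and all $\alpha\in\Lambda$. *)

From HB Require Import structures.
From mathcomp Require Import all_boot all_order.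
From mathcomp Require Import all_classical all_reals all_analysis.
From Stdlib Require Import Wellfounded.
Set Implicit Arguments. Unset Strict Implicit. Unset Printing Implicit Defensive.
Local Open Scope classical_set_scope.

Definition is_omega1 (I : Type) (lt : I -> I -> Prop) : Prop :=
  [/\ (forall a, ~ lt a a),
      (forall a b c, lt a b -> lt b c -> lt a c),
      (forall a b, lt a b \/ a = b \/ lt b a) &
      well_founded lt] /\
  (~ countable [set: I] /\ (forall a, countable [set b | lt b a])).

Definition le_pw (a b : nat -> nat) : Prop := forall n, (a n <= b n)%N.

Definition has_omega_omega_base (X : topologicalType) (x : X) : Prop :=
  exists U : (nat -> nat) -> set X,
    [/\ (forall a, nbhs x (U a)),
        (forall O, nbhs x O -> exists a, U a `<=` O) &
        (forall a b, le_pw a b -> U b `<=` U a)].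

(* X is (omega_1, omega)_k-equiconvergent at x; the index set omega_1 is
   represented by any (I, lt) satisfying is_omega1. *)
Definition equiconvergent_w1_w (X : topologicalType) (x : X)
  (I : Type) : Prop :=
  forall s : I -> nat -> X,
    (forall a, s a @ \oo --> x) ->
    exists L : set I,
      [/\ countable L, infinite_set L &
          forall O, nbhs x O ->
            exists n : nat, forall m, (n <= m)%N -> forall a, L a -> O (s a m)].

From mathcomp Require Import all_boot all_order.
From mathcomp Require Import all_classical all_reals all_analysis.
Local Open Scope classical_set_scope.

(* An omega^omega-base (U_a) yields, for each finite sequence t of naturals,
   the neighbourhood U[t] of x, the intersection of the U_a over all a
   extending t.  A sequence converging to x eventually lies in U[a|k] for some
   k: otherwise one a' dominating all the witnesses of failure would give a
   U_a' the sequence leaves infinitely often.  The countably many conditions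
   "s_i(m) lies in U[t] for all m >= n" form a subbase of a second-countable
   topology on the uncountable index set, so some index b is the limit of an
   injective sequence (A_j).  Given O containing U_a, the sequence s_b meets
   one such condition with t = a|k; all but finitely many s_(A_j) inherit it,
   and the remaining ones converge individually. *)

Lemma uncountable_condensation {T : countType} {I : Type} (S : T -> set I) :
  ~ countable [set: I] -> exists b, forall C, S C b -> infinite_set (S C).
Proof.
move=> ncI; apply: contrapT => /forallNP no_b; apply: ncI.
apply: (@sub_countable _ _ _ (\bigcup_(C in [set C | finite_set (S C)]) S C)).
  apply: subset_card_le => b _.
  have /existsNP[C /not_implyP[SCb /contrapT finC]] := no_b b.
  by exists C.
apply: bigcup_countable; first exact: countableP.
by move=> C /= finC; apply: finite_set_countable.
Qed.

Lemma finite_set_In {I : Type} (h : seq I) : finite_set [set a | List.In a h].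
Proof.
elim: h => [|y h IH]; first by apply: (sub_finite_set (B := set0)) => // a [].
apply: (sub_finite_set (B := [set y] `|` [set a | List.In a h])).
  by move=> a /= [->|?]; [left|right].
by rewrite finite_setU; split=> //; apply: finite_set1.
Qed.

Lemma injective_choice_infinite {I : Type} (P : nat -> set I) :
  (forall j, infinite_set (P j)) ->
  exists A : nat -> I, injective A /\ forall j, P j (A j).
Proof.
move=> P_inf.
have /choice[next next_spec] : forall h : seq I,
    exists a, P (size h) a /\ ~ List.In a h.
  move=> h; have /infinite_setN0[a [Pa h'a]] :=
    infinite_setD (P_inf (size h)) (finite_set_In h).
  by exists a.
pose hist j := iter j (fun h => rcons h (next h)) [::].
have size_hist j : size (hist j) = j by elim: j => //= j IH; rewrite size_rcons IH.
have hist_In i j : (i < j)%N -> List.In (next (hist i)) (hist j).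
  elim: j => // j IH; rewrite ltnS leq_eqVlt => /orP[/eqP ->|/IH ij] /=;
    rewrite -cats1; apply: List.in_or_app; [right; left | left] => //.
exists (next \o hist); split => [i j /= Aij|j]; last first.
  by have [] := next_spec (hist j); rewrite size_hist.
apply/eqP; case: ltngtP => // [ij|ji]; exfalso.
  by apply: (next_spec (hist j)).2; rewrite -Aij; apply: hist_In.
by apply: (next_spec (hist i)).2; rewrite Aij; apply: hist_In.
Qed.

Lemma uncountable_injective_cvg {T : countType} {I : Type} (R : I -> T -> Prop) :
  ~ countable [set: I] ->
  exists b (A : nat -> I),
    injective A /\ forall c, R b c -> \forall j \near \oo, R (A j) c.
Proof.
move=> ncI.
pose S (C : seq T) := [set a | {in C, forall c, R a c}].
have [b S_inf] := uncountable_condensation S ncI.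
pose C j := [seq c <- pmap unpickle (iota 0 j) | `[< R b c >]].
have SCb j : S (C j) b by move=> c; rewrite mem_filter => /andP[/asboolP].
have [A [A_inj SA]] := injective_choice_infinite _ (fun j => S_inf _ (SCb j)).
exists b, A; split=> // c Rbc; exists (pickle c).+1 => // j /= cj.
apply: (SA j); rewrite mem_filter; apply/andP; split; first exact/asboolP.
rewrite mem_pmap; apply/mapP; exists (pickle c); last by rewrite pickleK.
by rewrite mem_iota.
Qed.

Lemma le_pw_prefix_bound (a : nat -> nat) (b : nat -> nat -> nat) :
  (forall k, mkseq (b k) k = mkseq a k) -> exists g, forall k, le_pw (b k) g.
Proof.
move=> b_prefix; exists (fun i => maxn (a i) (\max_(k < i.+1) b k i)) => k i.
case: (ltnP i k) => [ik|ki].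
  have := congr1 (nth 0 ^~ i) (b_prefix k); rewrite !nth_mkseq // => ->.
  exact: leq_maxl.
apply: leq_trans (leq_maxr _ _).
exact: (@leq_bigmax _ (fun j : 'I_i.+1 => b j i) (Ordinal (ki : k < i.+1)%N)).
Qed.

Definition prefix_cap {X : Type} (U : (nat -> nat) -> set X) (t : seq nat) :
  set X := \bigcap_(a in [set a | mkseq a (size t) = t]) U a.

Lemma prefix_cap_mkseq {X : Type} (U : (nat -> nat) -> set X) a k :
  prefix_cap U (mkseq a k) `<=` U a.
Proof. by move=> y; apply; rewrite /= size_mkseq. Qed.

Section OmegaOmegaBase.
Context {X : topologicalType} {x : X} {U : (nat -> nat) -> set X}.
Hypotheses (U_nbhs : forall a, nbhs x (U a))
  (U_anti : forall a b, le_pw a b -> U b `<=` U a).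

Lemma cvg_prefix_cap {u : nat -> X} : u @ \oo --> x ->
  forall a, exists k, \forall m \near \oo, prefix_cap U (mkseq a k) (u m).
Proof.
move=> u_cvg a; apply: contrapT => /forallNP never.
have /choice[mb mb_spec] : forall k, exists mb : nat * (nat -> nat),
    [/\ (k <= mb.1)%N, mkseq mb.2 k = mkseq a k & ~ U mb.2 (u mb.1)].
  move=> k; apply: contrapT => /forallNP no_mb; apply: (never k).
  exists k => // m km b; rewrite size_mkseq => bk.
  by apply: contrapT => not_U; apply: (no_mb (m, b)).
have [g g_dom] : exists g, forall k, le_pw (mb k).2 g.
  by apply: (le_pw_prefix_bound a) => k; have [] := mb_spec k.
have [N _ u_g] := u_cvg _ (U_nbhs g).
have [N_le _ not_U] := mb_spec N.
exact: not_U (U_anti _ _ (g_dom N) _ (u_g _ N_le)).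
Qed.

End OmegaOmegaBase.

Theorem omega_omega_base_equiconvergent (X : topologicalType) (x : X)
    (I : Type) :
  ~ countable [set: I] -> has_omega_omega_base x -> equiconvergent_w1_w x I.
Proof.
move=> ncI [U [U_nbhs U_base U_anti]] s s_cvg.
pose R i (c : seq nat * nat) :=
  forall m, (c.2 <= m)%N -> prefix_cap U c.1 (s i m).
have [b [A [A_inj A_cvg]]] := uncountable_injective_cvg R ncI.
exists (range A); split.
- exact: sub_countable (card_image_le _ _) (countableP _).
- move=> /(finite_preimage (in2W A_inj)) fin.
  by apply/infinite_nat/(sub_finite_set _ fin) => j _; exists j.
- move=> O xO; have [a Ua_O] := U_base O xO.
  have [k [n _ b_tail]] := cvg_prefix_cap U_nbhs U_anti (s_cvg b) a.
  have [j0 _ A_tail] := A_cvg (mkseq a k, n) b_tail.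
  have [N _ A_head] : \forall m \near \oo, forall j : 'I_j0, U a (s (A j) m).
    by apply: filter_forall => j; apply/s_cvg/U_nbhs.
  exists (maxn n N) => m; rewrite geq_max => /andP[nm Nm] _ [j _ <-].
  apply: Ua_O; case: (ltnP j j0) => [jj0|j0j].
    exact: (A_head m Nm (Ordinal jj0)).
  exact: prefix_cap_mkseq (A_tail j j0j m nm).
Qed.

Theorem theorem4p1 (X : topologicalType) (x : X)
  (I : Type) (lt : I -> I -> Prop) (HI : is_omega1 lt) :
  has_omega_omega_base x -> equiconvergent_w1_w x I.
Proof. by have [_ [ncI _]] := HI; apply: omega_omega_base_equiconvergent. Qed.
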